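(* Any conventional higher-order logic built on Combinatory ReFLect (CR) is inconsistent.
   Context: Combinatory ReFLect (CR) is defined as follows. Types: $\sigma ::= \mathsf{bool} \mid \mathsf{unit} \mid \mathsf{term} \mid \sigma_1 \to \sigma_2$. Terms: $e ::= \mathsf{I}_\sigma \mid \mathsf{K}_{\sigma,\tau} \mid \mathsf{S}_{\sigma,\tau,\upsilon} \mid \mathsf{value}_\sigma \mid \mathsf{lift} \mid \mathsf{app} \mid e_1\,e_2 \mid \ulcorner e\urcorner$, where $\ulcorner e\urcorner$ is the quotation of $e$. Typing rules: $\mathsf{I}_\sigma:\sigma\to\sigma$; $\mathsf{K}_{\sigma,\tau}:\sigma\to\tau\to\sigma$; $\mathsf{S}_{\sigma,\tau,\upsilon}:(\sigma\to\tau\to\upsilon)\to(\sigma\to\tau)\to\sigma\to\upsilon$; $\mathsf{value}_\sigma:\mathsf{term}\to\sigma$; $\mathsf{lift}:\mathsf{term}\to\mathsf{term}$; $\mathsf{app}:\mathsf{term}\to\mathsf{term}\to\mathsf{term}$; if $e_1:\sigma\to\tau$ and $e_2:\sigma$ then $e_1\,e_2:\tau$; if $e:\sigma$ then $\ulcorner e\urcorner:\mathsf{term}$. Reduction rules: $\mathsf{I}_\sigma\,e\Rightarrow e$; $\mathsf{K}_{\sigma,\tau}\,e_1\,e_2\Rightarrow e_1$; $\mathsf{S}_{\sigma,\tau,\upsilon}\,e_1\,e_2\,e_3\Rightarrow e_1\,e_3\,(e_2\,e_3)$; if $e:\sigma$ then $\mathsf{value}_\sigma\,\ulcorner e\urcorner\Rightarrow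 e$; $\mathsf{lift}\,\ulcorner s\urcorner\Rightarrow\ulcorner\ulcorner s\urcorner\urcorner$; if $e_1\,e_2$ is well typed then $\mathsf{app}\,\ulcorner e_1\urcorner\,\ulcorner e_2\urcorner\Rightarrow\ulcorner e_1\,e_2\urcorner$. A conventional higher-order logic built on CR is one formulated in the style of Church's simple theory of types / the HOL logic, but with CR (extended by the usual logical constants, including equality and negation $\neg:\mathsf{bool}\to\mathsf{bool}$, typed by the same type system) in place of the simply typed $\lambda$-calculus: its terms of type $\mathsf{bool}$ are formulas, provable equality is reflexive, symmetric, transitive and closed under congruence, every instance of a reduction rule $e\Rightarrow e'$ yields a theorem $\vdash e=e'$, and it has the usual classical rules for negation (so that a proof of $\vdash p = \neg p$ for a formula $p$ yields a contradiction). Inconsistent means that a contradiction (every formula, in particular falsity) is provable. *)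

Inductive ty : Type :=
| TBool : ty
| TUnit : ty
| TTerm : ty
| TArr : ty -> ty -> ty.

(* Terms of CR, extended by the logical constants of the logic:
   equality (at every type), negation, an arbitrary further family of
   logical constants [Cst c] (typed by a given assignment), and typed
   variables (as in Church's simple theory of types). *)
Inductive tm (LC : Type) : Type :=
| I_ : ty -> tm LC
| K_ : ty -> ty -> tm LC
| S_ : ty -> ty -> ty -> tm LC
| Value : ty -> tm LC
| Lift : tm LC
| AppC : tm LC
| Ap : tm LC -> tm LC -> tm LC
| Quote : tm LC -> tm LC
| Eq : ty -> tm LC
| Neg : tm LC
| Cst : LC -> tm LC
| Var : nat -> ty -> tm LC.

Arguments I_ {LC}. Arguments K_ {LC}. Arguments S_ {LC}. Arguments Value {LC}.
Arguments Lift {LC}. Arguments AppC {LC}. Arguments Ap {LC}. Arguments Quote {LC}.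
Arguments Eq {LC}. Arguments Neg {LC}. Arguments Cst {LC}. Arguments Var {LC}.

Section CR.
Variable LC : Type.
Variable ctype : LC -> ty.

Inductive has_type : tm LC -> ty -> Prop :=
| T_I : forall s, has_type (I_ s) (TArr s s)
| T_K : forall s t, has_type (K_ s t) (TArr s (TArr t s))
| T_S : forall s t u,
    has_type (S_ s t u)
      (TArr (TArr s (TArr t u)) (TArr (TArr s t) (TArr s u)))
| T_Value : forall s, has_type (Value s) (TArr TTerm s)
| T_Lift : has_type Lift (TArr TTerm TTerm)
| T_AppC : has_type AppC (TArr TTerm (TArr TTerm TTerm))
| T_Ap : forall e1 e2 s t,
    has_type e1 (TArr s t) -> has_type e2 s -> has_type (Ap e1 e2) t
| T_Quote : forall e s, has_type e s -> has_type (Quote e) TTerm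
| T_Eq : forall s, has_type (Eq s) (TArr s (TArr s TBool))
| T_Neg : has_type Neg (TArr TBool TBool)
| T_Cst : forall c, has_type (Cst c) (ctype c)
| T_Var : forall n s, has_type (Var n s) s.

Definition well_typed (e : tm LC) : Prop := exists s, has_type e s.

Inductive red : tm LC -> tm LC -> Prop :=
| R_I : forall s e, red (Ap (I_ s) e) e
| R_K : forall s t e1 e2, red (Ap (Ap (K_ s t) e1) e2) e1
| R_S : forall s t u e1 e2 e3,
    red (Ap (Ap (Ap (S_ s t u) e1) e2) e3) (Ap (Ap e1 e3) (Ap e2 e3))
| R_Value : forall s e, has_type e s -> red (Ap (Value s) (Quote e)) e
| R_Lift : forall e, red (Ap Lift (Quote e)) (Quote (Quote e))
| R_App : forall e1 e2, well_typed (Ap e1 e2) ->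
    red (Ap (Ap AppC (Quote e1)) (Quote e2)) (Quote (Ap e1 e2)).

Definition eqf (s : ty) (a b : tm LC) : tm LC := Ap (Ap (Eq s) a) b.

Record conventional_HOL : Type := {
  Prov : tm LC -> Prop;
  prov_refl : forall s a, has_type a s -> Prov (eqf s a a);
  prov_sym : forall s a b, Prov (eqf s a b) -> Prov (eqf s b a);
  prov_trans : forall s a b c,
      Prov (eqf s a b) -> Prov (eqf s b c) -> Prov (eqf s a c);
  prov_cong : forall s t f g a b,
      has_type f (TArr s t) -> has_type g (TArr s t) ->
      has_type a s -> has_type b s ->
      Prov (eqf (TArr s t) f g) -> Prov (eqf s a b) ->
      Prov (eqf t (Ap f a) (Ap g b));
  prov_red : forall s e e', has_type e s -> red e e' -> Prov (eqf s e e');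
  (* classical negation: a proof of p = ~p yields a contradiction,
     i.e. every formula becomes provable *)
  prov_neg_contra : forall p, has_type p TBool ->
      Prov (eqf TBool p (Ap Neg p)) ->
      forall q, has_type q TBool -> Prov q
}.

End CR.

Arguments Prov {LC ctype}.

(* The combinator [D := S (K not) (S (K value) (S app lift))] satisfies
   [D t = not (value (app t (lift t)))]; applied to its own quotation it
   rebuilds, by reduction, the quoted term [D (quote D)] and then unquotes
   it, so [D (quote D) = not (D (quote D))] is provable: a Liar sentence.
   The same construction gives a fixed point of every [h : s -> s]. *)

Section Inconsistency.
Variable LC : Type.
Variable ctype : LC -> ty.
Variable L : conventional_HOL LC ctype.

Notation has_type := (has_type LC ctype).
Notation Prov := (Prov L).
Notation eqf := (eqf LC).

Ltac typecheck := repeat (eassumption || econstructor).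

Lemma prov_congr s t f a b :
  has_type f (TArr s t) -> has_type a s -> has_type b s ->
  Prov (eqf s a b) -> Prov (eqf t (Ap f a) (Ap f b)).
Proof.
  intros Hf Ha Hb Hab.
  apply (prov_cong _ _ L s t f f a b); auto.
  apply (prov_refl _ _ L); exact Hf.
Qed.

Lemma prov_congl s t f g a :
  has_type f (TArr s t) -> has_type g (TArr s t) -> has_type a s ->
  Prov (eqf (TArr s t) f g) -> Prov (eqf t (Ap f a) (Ap g a)).
Proof.
  intros Hf Hg Ha Hfg.
  apply (prov_cong _ _ L s t f g a a); auto.
  apply (prov_refl _ _ L); exact Ha.
Qed.

Definition comp (s t u : ty) (h g : tm LC) : tm LC :=
  Ap (Ap (S_ s t u) (Ap (K_ (TArr t u) s) h)) g.

Lemma comp_type s t u h g :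
  has_type h (TArr t u) -> has_type g (TArr s t) ->
  has_type (comp s t u h g) (TArr s u).
Proof. intros; unfold comp; typecheck. Qed.

Lemma prov_comp s t u h g a :
  has_type h (TArr t u) -> has_type g (TArr s t) -> has_type a s ->
  Prov (eqf u (Ap (comp s t u h g) a) (Ap h (Ap g a))).
Proof.
  intros Hh Hg Ha.
  apply (prov_trans _ _ L u _ (Ap (Ap (Ap (K_ (TArr t u) s) h) a) (Ap g a))).
  - apply (prov_red _ _ L); [typecheck | apply R_S].
  - apply prov_congl with (s := t); try typecheck.
    apply (prov_red _ _ L); [typecheck | apply R_K].
Qed.

Definition diag : tm LC := Ap (Ap (S_ TTerm TTerm TTerm) AppC) Lift.

Lemma diag_type : has_type diag (TArr TTerm TTerm).
Proof. unfold diag; typecheck. Qed.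

Lemma prov_diag_quote e s :
  has_type e (TArr TTerm s) ->
  Prov (eqf TTerm (Ap diag (Quote e)) (Quote (Ap e (Quote e)))).
Proof.
  intros He.
  apply (prov_trans _ _ L TTerm _ (Ap (Ap AppC (Quote e)) (Ap Lift (Quote e)))).
  - apply (prov_red _ _ L); [unfold diag; typecheck | apply R_S].
  - apply (prov_trans _ _ L TTerm _ (Ap (Ap AppC (Quote e)) (Quote (Quote e)))).
    + apply prov_congr with (s := TTerm); try typecheck.
      apply (prov_red _ _ L); [typecheck | apply R_Lift].
    + apply (prov_red _ _ L); [typecheck | apply R_App].
      exists s; typecheck.
Qed.

Definition fixer (s : ty) (h : tm LC) : tm LC :=
  comp TTerm s s h (comp TTerm TTerm s (Value s) diag).

Lemma fixer_type s h :
  has_type h (TArr s s) -> has_type (fixer s h) (TArr TTerm s).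
Proof.
  intros Hh; apply comp_type; [exact Hh|].
  apply comp_type; [typecheck | exact diag_type].
Qed.

Definition fixpoint (s : ty) (h : tm LC) : tm LC :=
  Ap (fixer s h) (Quote (fixer s h)).

Lemma fixpoint_type s h :
  has_type h (TArr s s) -> has_type (fixpoint s h) s.
Proof.
  intros Hh; pose proof (fixer_type s h Hh); unfold fixpoint; typecheck.
Qed.

Theorem prov_fixpoint s h :
  has_type h (TArr s s) ->
  Prov (eqf s (fixpoint s h) (Ap h (fixpoint s h))).
Proof.
  intros Hh.
  pose proof (fixer_type s h Hh) as HF.
  pose proof (fixpoint_type s h Hh) as HX.
  pose proof diag_type as Hdiag.
  set (F := fixer s h) in *.
  assert (HV : has_type (Value s) (TArr TTerm s)) by typecheck.
  assert (HG : has_type (comp TTerm TTerm s (Value s) diag) (TArr TTerm s))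
    by (apply comp_type; assumption).
  apply (prov_trans _ _ L s _
           (Ap h (Ap (comp TTerm TTerm s (Value s) diag) (Quote F)))).
  - apply prov_comp; typecheck.
  - apply prov_congr with (s := s); try typecheck.
    apply (prov_trans _ _ L s _ (Ap (Value s) (Ap diag (Quote F)))).
    + apply prov_comp; typecheck.
    + apply (prov_trans _ _ L s _ (Ap (Value s) (Quote (fixpoint s h)))).
      * apply prov_congr with (s := TTerm); try typecheck.
        apply prov_diag_quote with (s := s); exact HF.
      * apply (prov_red _ _ L); [typecheck | apply R_Value; exact HX].
Qed.

End Inconsistency.

Theorem corollary1 :
  forall (LC : Type) (ctype : LC -> ty) (L : conventional_HOL LC ctype)
         (q : tm LC), has_type LC ctype q TBool -> Prov L q.
Proof.
  intros LC ctype L q Hq.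
  assert (Hneg : has_type LC ctype Neg (TArr TBool TBool)) by constructor.
  apply (prov_neg_contra _ _ L (fixpoint LC TBool Neg)).
  - exact (fixpoint_type LC ctype TBool Neg Hneg).
  - exact (prov_fixpoint LC ctype L TBool Neg Hneg).
  - exact Hq.
Qed.
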